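(* Let $G$ be a $c$-edge-colored multigraph (without loops) with $n$ vertices such that every vertex is incident to at least two edges of different colors. Suppose at least one vertex is incident to at least three edges of pairwise different colors, and that $\delta_{dym}(x)+\delta_{dym}(y)\ge n+1$ for every pair of distinct vertices $x,y$. Then $G$ has a properly colored hamiltonian cycle.
   Context: A $c$-edge-colored multigraph is a finite multigraph without loops (parallel edges allowed) together with a map $\phi:E(G)\to\{1,\ldots,c\}$. For $u,v\in V(G)$, $E_{uv}$ is the set of edges with end vertices $u$ and $v$. Here $\delta_{dym}(x)$ is the number of vertices $y$ such that $E_{xy}$ contains two edges of different colors. A properly colored (PC) hamiltonian cycle is a cyclic sequence $(x_1,f_1,x_2,f_2,\ldots,x_n,f_n,x_1)$ containing every vertex exactly once, with $f_i\in E_{x_ix_{i+1}}$ (indices mod $n$), such that any two consecutive edges, including $f_n$ and $f_1$, have different colors. *)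

From mathcomp Require Import all_boot.
Set Implicit Arguments. Unset Strict Implicit. Unset Printing Implicit Defensive.

(* A c-edge-colored multigraph: vertex type V, edge type E (parallel edges
   allowed since distinct edges may have the same endpoints), endpoints
   src/dst with src e != dst e (no loops), coloring phi : E -> 'I_c
   (colors 1..c represented as 0..c-1). *)
Section Multigraph.
Variables (V E : finType) (c : nat) (src dst : E -> V) (phi : E -> 'I_c).

Definition incident (e : E) (x : V) : bool := (src e == x) || (dst e == x).

Definition joins (e : E) (u v : V) : bool :=
  ((src e == u) && (dst e == v)) || ((src e == v) && (dst e == u)).

Definition delta_dym (x : V) : nat :=
  #|[set y : V | [exists e1 : E, exists e2 : E,
       [&& joins e1 x y, joins e2 x y & phi e1 != phi e2]]]|.

Definition PC_ham_cycle (x : 'I_#|V| -> V) (f : 'I_#|V| -> E) : Prop :=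
  injective x /\
  forall i : 'I_#|V|, joins (f i) (x i) (x (ordS i)) /\ phi (f i) != phi (f (ordS i)).

Definition has_PC_ham_cycle : Prop :=
  exists (x : 'I_#|V| -> V) (f : 'I_#|V| -> E), PC_ham_cycle x f.

End Multigraph.

From mathcomp Require Import all_boot zify.
Set Implicit Arguments. Unset Strict Implicit. Unset Printing Implicit Defensive.

(* Call x and y [dym]-adjacent when E_xy carries two colours; delta_dym is the
   degree in this simple graph, so the hypothesis is Ore's condition
   deg x + deg y >= n + 1, which makes the graph Hamiltonian-connected (closure
   argument with Posa rotations). Every link of a Hamiltonian cycle of [dym]
   offers at least two colours, and picking them properly is list colouring a
   cycle: this succeeds unless n is odd and all links offer the same two
   colours S. In that case, either some [dym]-edge xy offers other colours, and
   rotations give a Hamiltonian cycle through xy and an old link; or every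
   [dym]-edge offers exactly S, and the vertex seeing three colours has an edge
   e coloured outside S, which closes a Hamiltonian path into a cycle that is
   coloured greedily starting from e. *)

Lemma count_gt1_neq (T : eqType) (P : pred T) s x :
  uniq s -> 1 < count P s -> exists2 y, y \in s & P y && (y != x).
Proof.
move=> s_uniq P_gt1; apply/hasP; rewrite has_count.
have : count P s <= count (pred1 x) s + count (fun y => P y && (y != x)) s.
  rewrite -count_predUI; apply: leq_trans (leq_addr _ _); apply: sub_count => y Py /=.
  by rewrite Py orbC; case: eqP.
by rewrite count_uniq_mem //; case: (x \in s) => /=; lia.
Qed.

Lemma modn_rot_succ n k m : (k.+1 + m) %% n = ((k + m) %% n).+1 %% n.
Proof. by rewrite addSn -addn1 -[in RHS]addn1 modnDml. Qed.

Section HamiltonianPaths.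
Variable V : finType.
Local Notation n := #|V|.

(* Hamiltonian paths and cycles are listed as q 0, ..., q n.-1 (a cycle closes
   through k.+1 %% n); the values of q beyond n.-1 are irrelevant. *)
Definition injective_below (q : nat -> V) :=
  forall i j, i < n -> j < n -> q i = q j -> i = j.

Definition ham_path (r : rel V) (q : nat -> V) :=
  injective_below q /\ forall k, k.+1 < n -> r (q k) (q k.+1).

Definition ham_cycle (r : rel V) (q : nat -> V) :=
  injective_below q /\ forall k, k < n -> r (q k) (q (k.+1 %% n)).

Definition deg (r : rel V) (x : V) := #|[set y | r x y]|.

Definition ore (r : rel V) := forall x y, x != y -> n.+1 <= deg r x + deg r y.

Lemma perm_iota_enum (q : nat -> V) :
  injective_below q -> perm_eq (map q (iota 0 n)) (enum V).
Proof.
move=> q_inj; have uq : uniq (map q (iota 0 n)).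
  by rewrite map_inj_in_uniq ?iota_uniq // => i j; rewrite !mem_iota; apply: q_inj.
apply: uniq_perm => //; first exact: enum_uniq.
have sub : {subset map q (iota 0 n) <= enum V} by move=> x; rewrite mem_enum.
have [] // := uniq_min_size uq sub.
by rewrite (size_map q) size_iota cardT enumT.
Qed.

Lemma injective_below_surj (q : nat -> V) :
  injective_below q -> forall x, exists2 i, i < n & q i = x.
Proof.
move=> /perm_iota_enum/perm_mem q_perm x.
have /mapP[i] : x \in map q (iota 0 n) by rewrite q_perm mem_enum.
by rewrite mem_iota => ? ->; exists i.
Qed.

Lemma deg_count (r : rel V) (q : nat -> V) x :
  injective_below q -> deg r x = count (fun k => r x (q k)) (iota 0 n).
Proof.
move=> /perm_iota_enum/permP q_perm.
by rewrite /deg cardsE cardE /enum_mem size_filter -enumT -q_perm count_map.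
Qed.

Definition rev_between (a b : nat) (q : nat -> V) (k : nat) :=
  if a <= k < b then q (a + b - k.+1) else q k.

Lemma rev_between_out a b q k : (k < a) || (b <= k) -> rev_between a b q k = q k.
Proof. by rewrite /rev_between; case: (leqP a k); case: (ltnP k b) => //=; lia. Qed.

Lemma injective_below_rev_between a b q :
  b <= n -> injective_below q -> injective_below (rev_between a b q).
Proof.
move=> bn q_inj i j i_lt j_lt; rewrite /rev_between.
case: (leqP a i) => /= ?; case: (ltnP i b) => /= ?;
  case: (leqP a j) => /= ?; case: (ltnP j b) => /= ? /q_inj; lia.
Qed.

Lemma rev_between_path (r : rel V) (r_sym : symmetric r) a b q :
  0 < a < b -> b <= n ->
  (forall k, k.+1 < n -> k.+1 != a -> k.+1 != b -> r (q k) (q k.+1)) ->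
  r (q a.-1) (q b.-1) -> (b < n -> r (q a) (q b)) ->
  forall k, k.+1 < n -> r (rev_between a b q k) (rev_between a b q k.+1).
Proof.
move=> /andP[a_gt0 ab] bn q_path r_left r_right k kn; rewrite /rev_between.
case: (leqP a k) => /= ak; case: (ltnP k b) => /= kb;
  case: (leqP a k.+1) => /= ak1; case: (ltnP k.+1 b) => /= k1b; try lia.
- rewrite r_sym; have -> : a + b - k.+1 = (a + b - k.+2).+1 by lia.
  by apply: q_path; lia.
- have -> : a + b - k.+1 = a by lia.
  have -> : k.+1 = b by lia.
  by apply: r_right; lia.
- by apply: q_path; lia.
- have -> : k = a.-1 by lia.
  by have -> : a + b - a.-1.+2 = b.-1 by lia.
- by apply: q_path; lia.
Qed.

Lemma rev_between_link (T : Type) (f : V -> V -> T) (fC : forall x y, f x y = f y x)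
    a b q k :
  a < b -> b <= n -> k.+1 < n -> k.+1 != a -> k.+1 != b ->
  exists2 k', k'.+1 < n &
    f (rev_between a b q k') (rev_between a b q k'.+1) = f (q k) (q k.+1) /\
    f (rev_between a b q k) (rev_between a b q k.+1) = f (q k') (q k'.+1).
Proof.
move=> ab bn kn ka kb; rewrite /rev_between.
case: (boolP ((k.+1 < a) || (b <= k))) => [out | ].
  exists k => //; case: (leqP a k); case: (ltnP k b); case: (leqP a k.+1);
  case: (ltnP k.+1 b) => //= *; lia.
rewrite negb_or -!leqNgt -ltnNge => /andP[ak kb'].
exists (a + b - k.+2); first lia.
have [-> ->] : a <= a + b - k.+2 < b /\ a <= (a + b - k.+2).+1 < b by lia.
have [-> ->] : a <= k < b /\ a <= k.+1 < b by lia.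
by split; rewrite fC; congr (f (q _) (q _)); lia.
Qed.

Lemma ore_crossing_count (r : rel V) q U W :
  injective_below q -> ore r -> U != W ->
  n.+1 <= count (fun k => r U (q k) && r W (q k.+1)) (iota 0 n.-1)
          + count (fun k => r U (q k) || r W (q k.+1)) (iota 0 n.-1)
          + r U (q n.-1) + r W (q 0).
Proof.
move=> q_inj r_ore UW; have n_gt0 : 0 < n by apply/card_gt0P; exists U.
have iota_rcons : iota 0 n = rcons (iota 0 n.-1) n.-1.
  by rewrite -cats1 -{1}(prednK n_gt0) -addn1 iotaD.
have iota_cons : iota 0 n = 0 :: map succn (iota 0 n.-1).
  by rewrite -{1}(prednK n_gt0) /= -[1]addn0 iotaDl.
set s := iota 0 n.-1.
have degU : deg r U = count (fun k => r U (q k)) s + r U (q n.-1).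
  by rewrite (deg_count _ _ q_inj) iota_rcons -cats1 count_cat /= addn0.
have degW : deg r W = r W (q 0) + count (fun k => r W (q k.+1)) s.
  by rewrite (deg_count _ _ q_inj) iota_cons /= count_map.
have UI : count (fun k => r U (q k) || r W (q k.+1)) s
          + count (fun k => r U (q k) && r W (q k.+1)) s
          = count (fun k => r U (q k)) s + count (fun k => r W (q k.+1)) s.
  exact: count_predUI.
by have := r_ore _ _ UW; rewrite degU degW; lia.
Qed.

Lemma ham_path_rev_inner (r : rel V) (r_sym : symmetric r) a b q :
  0 < a < b -> b < n -> injective_below q ->
  (forall k, k.+1 < n -> k.+1 != a -> k.+1 != b -> r (q k) (q k.+1)) ->
  r (q a.-1) (q b.-1) -> r (q a) (q b) ->
  [/\ ham_path r (rev_between a b q), rev_between a b q 0 = q 0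
    & rev_between a b q n.-1 = q n.-1].
Proof.
move=> ab bn q_inj q_path r_left r_right; split.
- split; first by apply: injective_below_rev_between => //; exact: ltnW.
  by apply: rev_between_path => //; exact: ltnW.
- by rewrite rev_between_out //; case/andP: ab => ->.
- by rewrite rev_between_out //; apply/orP; right; lia.
Qed.

Lemma ham_path_rev_suffix (r : rel V) (r_sym : symmetric r) a q :
  0 < a < n -> ham_path r q -> r (q a.-1) (q n.-1) -> ham_path r (rev_between a n q).
Proof.
move=> an [q_inj q_path] r_left; split; first exact: injective_below_rev_between.
apply: rev_between_path => //; first by move=> k kn _ _; apply: q_path.
by rewrite ltnn.
Qed.

(* Counting gives a crossing j: reversing the segment between the broken link
   and j removes the broken link. *)
Lemma ham_path_repair (r : rel V) q p :
  symmetric r -> irreflexive r -> ore r -> injective_below q ->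
  p.+1 < n -> ~~ r (q p) (q p.+1) ->
  (forall k, k.+1 < n -> k != p -> r (q k) (q k.+1)) ->
  exists q', [/\ ham_path r q', q' 0 = q 0 & q' n.-1 = q n.-1].
Proof.
move=> r_sym r_irr r_ore q_inj pn not_r q_path.
have UW : q p != q p.+1 by apply/eqP => /q_inj; lia.
have cnt := ore_crossing_count q_inj r_ore UW.
set s := iota 0 n.-1 in cnt.
have p_in : p \in s by rewrite mem_iota; lia.
have no_cross_p : count (fun k => r (q p) (q k) || r (q p.+1) (q k.+1)) s < size s.
  rewrite -(count_predC (fun k => r (q p) (q k) || r (q p.+1) (q k.+1))) -addn1.
  rewrite leq_add2l -has_count; apply/hasP; exists p => //=.
  by rewrite !r_irr.
have /hasP[j] : has (fun k => r (q p) (q k) && r (q p.+1) (q k.+1)) s.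
  by rewrite has_count; move: no_cross_p; rewrite size_iota; lia.
rewrite mem_iota add0n => jn /andP[r_pj r_pj1].
have jp : j != p by apply: contraTneq r_pj => ->; rewrite r_irr.
have [pj | jp'] := ltnP p j.
- exists (rev_between p.+1 j.+1 q); apply: ham_path_rev_inner => //; first lia.
  by move=> k kn kp _; apply: q_path; rewrite // -eqSS.
- exists (rev_between j.+1 p.+1 q); rewrite r_sym in r_pj; rewrite r_sym in r_pj1.
  apply: ham_path_rev_inner => //; first lia.
  by move=> k kn _ kp; apply: q_path; rewrite // -eqSS.
Qed.

Lemma ham_path_complete (r : rel V) x y :
  (forall a b, a != b -> r a b) -> x != y ->
  exists q, [/\ ham_path r q, q 0 = x & q n.-1 = y].
Proof.
move=> r_full xy; set s := x :: rcons (enum ([set~ x] :\ y)) y.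
have size_mid : size (enum ([set~ x] :\ y)) = n - 2.
  rewrite -cardE; have := cardsD1 y [set~ x]; rewrite cardsC1 !inE eq_sym xy /=.
  lia.
have n_gt1 : 1 < n by apply/card_gt1P; exists x, y.
have size_s : size s = n by rewrite /= size_rcons size_mid -addn2 subnK.
have s_uniq : uniq s.
  by rewrite /= rcons_uniq enum_uniq mem_rcons in_cons !mem_enum !inE !eqxx (negbTE xy).
have s_inj : injective_below (nth x s).
  by move=> i j i_lt j_lt /eqP; rewrite nth_uniq ?size_s // => /eqP.
exists (nth x s); split => //.
- split => // k kn; apply: r_full; apply/eqP => /s_inj; lia.
- by rewrite -size_s nth_last /= last_rcons.
Qed.

Lemma injective_below_link q k p :
  injective_below q -> k.+1 < n -> p.+1 < n ->
  [set q k; q k.+1] = [set q p; q p.+1] -> k = p.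
Proof.
move=> q_inj kn pn link_eq.
have : q k \in [set q p; q p.+1] by rewrite -link_eq set21.
have : q k.+1 \in [set q p; q p.+1] by rewrite -link_eq set22.
by case/set2P => /q_inj e1; case/set2P => /q_inj e2; move: e1 e2; lia.
Qed.

Definition add_edge (r : rel V) (u v : V) : rel V :=
  fun a b => [|| r a b, (a == u) && (b == v) | (a == v) && (b == u)].

Lemma ham_path_add_edge (r : rel V) u v q :
  symmetric r -> irreflexive r -> ore r -> ham_path (add_edge r u v) q ->
  exists q', [/\ ham_path r q', q' 0 = q 0 & q' n.-1 = q n.-1].
Proof.
move=> r_sym r_irr r_ore [q_inj q_path].
have new_link k : k.+1 < n -> ~~ r (q k) (q k.+1) -> [set q k; q k.+1] = [set u; v].
  move=> kn; move: (q_path k kn); rewrite /add_edge.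
  by case/or3P => [-> // | | ] /andP[/eqP-> /eqP->] _ //; exact: setUC.
case: (boolP (has (fun k => ~~ r (q k) (q k.+1)) (iota 0 n.-1))); last first.
  move=> /hasPn r_path; exists q; split => //; split => // k kn.
  by apply/negPn/r_path; rewrite mem_iota; lia.
case/hasP => p; rewrite mem_iota add0n => p_lt not_r.
have pn : p.+1 < n by lia.
apply: (ham_path_repair r_sym r_irr r_ore q_inj pn not_r) => k kn kp.
apply/negPn/negP => /(new_link k kn); rewrite -(new_link p pn not_r).
by move/(injective_below_link q_inj kn pn); apply/eqP.
Qed.

Definition non_edges (r : rel V) := [set p : V * V | (p.1 != p.2) && ~~ r p.1 p.2].

(* Induction on the number of non-edges: a path for [add_edge r u v] uses the
   new edge at most once and is then repaired. *)
Lemma ore_ham_connected (r : rel V) x y :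
  symmetric r -> irreflexive r -> ore r -> x != y ->
  exists q, [/\ ham_path r q, q 0 = x & q n.-1 = y].
Proof.
have [m] := ubnP #|non_edges r|; elim: m r x y => // m IH r x y ne_lt r_sym r_irr r_ore xy.
have [ne0 | [[u v] uv_ne]] := set_0Vmem (non_edges r).
  apply: ham_path_complete xy => a b ab; apply/negPn/negP => not_r.
  by have := in_set0 (a, b); rewrite -ne0 inE ab not_r.
move: uv_ne; rewrite inE /= => /andP[uv not_r].
pose r' := add_edge r u v.
have r'_sym : symmetric r'.
  by move=> a b; rewrite /r' /add_edge r_sym; do ![case: (_ == _)]; rewrite /= ?orbT ?orbF.
have r'_irr : irreflexive r'.
  move=> a; rewrite /r' /add_edge r_irr /=.
  by apply/negbTE; apply: contra uv => /orP[] /andP[/eqP<- /eqP<-].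
have r'_ore : ore r'.
  move=> a b ab; apply: leq_trans (r_ore a b ab) _.
  apply: leq_add; apply: subset_leq_card; apply/subsetP => z;
    by rewrite !inE /r' /add_edge => ->.
have ne' : #|non_edges r'| < #|non_edges r|.
  apply: proper_card; apply/properP; split.
    by apply/subsetP => -[a b]; rewrite !inE /r' /add_edge /= !negb_or => /andP[-> /and3P[]].
  by exists (u, v); rewrite !inE /r' /add_edge /= ?uv ?not_r // !eqxx orbT andbF.
have [q [q_path q0 qn]] := IH r' x y (leq_trans ne' ne_lt) r'_sym r'_irr r'_ore xy.
have [q' [q'_path q'0 q'n]] := ham_path_add_edge r_sym r_irr r_ore q_path.
by exists q'; rewrite q'0 q'n.
Qed.

Lemma ham_cycle_of_path (r : rel V) q :
  ham_path r q -> r (q n.-1) (q 0) -> ham_cycle r q.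
Proof.
move=> [q_inj q_path] r_close; split => // k kn.
have [k1n | n_le] := ltnP k.+1 n; first by rewrite modn_small //; apply: q_path.
have -> : k = n.-1 by lia.
by rewrite prednK ?modnn //; lia.
Qed.

Lemma ore_ham_cycle (r : rel V) :
  symmetric r -> irreflexive r -> ore r -> 1 < n -> exists q, ham_cycle r q.
Proof.
move=> r_sym r_irr r_ore /card_gt1P[x [y [_ _ xy]]].
have [a [b r_ab]] : exists a b, r a b.
  have : 0 < deg r x + deg r y by apply: leq_trans (r_ore x y xy).
  rewrite addn_gt0 => /orP[] /card_gt0P[b]; rewrite inE => ?; by [exists x, b | exists y, b].
have ab : a != b by apply: contraTneq r_ab => ->; rewrite r_irr.
have [q [q_path q0 qn]] := ore_ham_connected r_sym r_irr r_ore ab.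
by exists q; apply: ham_cycle_of_path; rewrite // q0 qn r_sym.
Qed.

Lemma ore_ends_crossing (r : rel V) R j :
  irreflexive r -> ore r -> injective_below R -> 1 < n ->
  exists i, [/\ i.+1 < n, i != j, r (R n.-1) (R i) & r (R 0) (R i.+1)].
Proof.
move=> r_irr r_ore R_inj n_gt1.
have ends : R n.-1 != R 0 by apply/eqP => /R_inj; lia.
have := ore_crossing_count R_inj r_ore ends; rewrite !r_irr /= !addn0.
have := count_size (fun k => r (R n.-1) (R k) || r (R 0) (R k.+1)) (iota 0 n.-1).
rewrite size_iota => size_bound cnt.
have two : 1 < count (fun k => r (R n.-1) (R k) && r (R 0) (R k.+1)) (iota 0 n.-1).
  (* [set] merges the two elaborations of #|V| present here, which [lia] would
     take for distinct atoms. *)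
  by set m := n in n_gt1 size_bound cnt *; lia.
have [i] := count_gt1_neq j (iota_uniq 0 n.-1) two.
rewrite mem_iota add0n => i_lt /andP[/andP[r_end r_start] ij].
by exists i; split => //; rewrite -ltn_predRL.
Qed.

Lemma ham_cycle_rot (r : rel V) q m :
  ham_cycle r q -> ham_path r (fun k => q ((k + m) %% n)).
Proof.
move=> [q_inj q_cyc]; split=> [a b an bn | k kn].
  have n_gt0 : 0 < n by lia.
  move/(q_inj _ _ (ltn_pmod _ n_gt0) (ltn_pmod _ n_gt0))/eqP.
  by rewrite eqn_modDr !modn_small // => /eqP.
by rewrite modn_rot_succ; apply/q_cyc/ltn_pmod; lia.
Qed.

Section Labels.
Variables (T : eqType) (f : V -> V -> T).
Hypothesis fC : forall x y, f x y = f y x.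

(* Rotate q so that x comes last, then reverse the positions after that of y:
   the resulting path uses the link y x once and links of q elsewhere. *)
Lemma ham_path_through_edge (r : rel V) q S x y :
  symmetric r -> irreflexive r -> ham_cycle r q ->
  (forall k, k < n -> f (q k) (q (k.+1 %% n)) = S) -> r x y -> f x y != S ->
  exists R j, [/\ ham_path r R, 0 < j, j.+2 < n, f (R j) (R j.+1) != S
              & forall k, k.+1 < n -> k != j -> f (R k) (R k.+1) = S].
Proof.
move=> r_sym r_irr q_cyc q_lab r_xy f_xy.
have [ix ixn qix] := injective_below_surj q_cyc.1 x.
pose Z k := q ((k + ix.+1) %% n).
have [Z_inj Z_path] : ham_path r Z := ham_cycle_rot ix.+1 q_cyc.
have Z_lab k : k.+1 < n -> f (Z k) (Z k.+1) = S.
  by move=> kn; rewrite /Z modn_rot_succ q_lab // ltn_pmod //; lia.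
have Z_last : Z n.-1 = x.
  by rewrite /Z addnS -addSn prednK ?modnDl ?modn_small //; lia.
have [j jn Zj] := injective_below_surj Z_inj y.
have j_last : j != n.-1 by apply: contraTneq r_xy => j_eq; rewrite -Zj j_eq Z_last r_irr.
have j0 : j != 0.
  by apply: contraNneq f_xy => j_eq; rewrite -Zj j_eq /Z add0n -qix q_lab.
have j_pen : j.+1 != n.-1.
  apply: contraNneq f_xy => j_eq; rewrite fC -Zj -Z_last -j_eq Z_lab //; lia.
pose R := rev_between j.+1 n Z.
have R_path : ham_path r R.
  apply: ham_path_rev_suffix => //; first lia.
  by rewrite /= Zj Z_last r_sym.
have j1n : j.+1 < n by lia.
exists R, j; split => //; [lia | lia | | ].
- have R_j : R j = y by rewrite /R rev_between_out ?ltnSn.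
  have R_j1 : R j.+1 = x.
    rewrite /R /rev_between leqnn j1n /=.
    by have -> : j.+1 + n - j.+2 = n.-1 by lia.
  by rewrite R_j R_j1 fC.
- move=> k kn kj.
  have [||k' k'n [_ ->]] := rev_between_link fC (a := j.+1) Z j1n (leqnn n) kn.
  - by rewrite eqSS.
  - by rewrite neq_ltn kn.
  - by apply: Z_lab.
Qed.

(* Either R closes up, or a Posa rotation at a crossing i <> j does; it keeps
   link j and at least one other link of R. *)
Lemma ore_ham_cycle_two_labels (r : rel V) R j S :
  symmetric r -> irreflexive r -> ore r -> ham_path r R -> 0 < j -> j.+2 < n ->
  f (R j) (R j.+1) != S -> (forall k, k.+1 < n -> k != j -> f (R k) (R k.+1) = S) ->
  exists s k k', [/\ ham_cycle r s, k < n, k' < n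
                   & f (s k) (s (k.+1 %% n)) != f (s k') (s (k'.+1 %% n))].
Proof.
move=> r_sym r_irr r_ore [R_inj R_path] j_gt0 jn f_j f_other.
suff [s [s_path s_close [k k_lt f_k] [k' k'_lt f_k']]] : exists s,
    [/\ ham_path r s, r (s n.-1) (s 0), exists2 k, k.+1 < n & f (s k) (s k.+1) != S
      & exists2 k, k.+1 < n & f (s k) (s k.+1) = S].
  exists s, k, k'; split; [exact: ham_cycle_of_path | exact: ltnW | exact: ltnW |].
  by rewrite !modn_small // f_k'.
case: (boolP (r (R n.-1) (R 0))) => [R_close | _].
  exists R; split => //.
  - by exists j; first lia.
  - by exists 0; [lia | apply: f_other; lia].
have n_gt1 : 1 < n by lia.
have [i [i_lt ij r_end r_start]] := ore_ends_crossing j r_irr r_ore R_inj n_gt1.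
pose s := rev_between i.+1 n R.
have link_kept k : k.+1 < n -> k != i ->
    exists2 k', k'.+1 < n & f (s k') (s k'.+1) = f (R k) (R k.+1).
  move=> kn ki.
  have [||k' k'n [f_eq _]] := rev_between_link fC (a := i.+1) R i_lt (leqnn n) kn.
  - by rewrite eqSS.
  - by rewrite neq_ltn kn.
  - by exists k'.
exists s; split.
- by apply: ham_path_rev_suffix => //; rewrite /= r_sym.
- have s_last : s n.-1 = R i.+1.
    by rewrite /s /rev_between ifT; [congr R | apply/andP]; lia.
  by rewrite s_last /s rev_between_out // r_sym.
- have ji : j != i by rewrite eq_sym.
  have [k' k'n f_eq] := link_kept j (ltnW jn) ji.
  by exists k'; rewrite // f_eq.
- pose k := if i == 0 then j.+1 else 0.
  have [k_lt k_j k_i] : [/\ k.+1 < n, k != j & k != i].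
    by rewrite /k; case: eqP => i0; split; lia.
  have [k' k'n f_eq] := link_kept k k_lt k_i.
  by exists k'; rewrite // f_eq f_other.
Qed.

End Labels.

End HamiltonianPaths.

Section CycleListColoring.
Variables (T : finType) (n : nat).

Definition cycle_colorable (P : nat -> {set T}) :=
  exists col : nat -> T, forall k, k < n -> col k \in P k /\ col k != col (k.+1 %% n).

Lemma path_list_coloring (P : nat -> {set T}) a m :
  a \in P 0 -> (forall k, 0 < k < m -> 1 < #|P k|) ->
  exists col : nat -> T,
    col 0 = a /\ forall k, k < m -> col k \in P k /\ (k.+1 < m -> col k != col k.+1).
Proof.
move=> aP0; elim: m => [|m IH] P_big; first by exists (fun=> a).
have [|col [col0 col_ok]] := IH.
  by move=> k /andP[k_gt0 km]; apply: P_big; rewrite k_gt0 ltnW.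
have [-> | m_gt0] := posnP m.
  by exists col; split=> // -[|k] // _; rewrite col0.
have P_m : 1 < #|P m| by apply: P_big; rewrite m_gt0 ltnSn.
have [b] : exists b, b \in P m :\ col m.-1.
  apply/set0Pn; rewrite -card_gt0 -ltnS; apply: leq_trans P_m _.
  by rewrite (cardsD1 (col m.-1)) addnC -addn1 leq_add2l leq_b1.
rewrite !inE => /andP[b_col b_in].
exists (fun k => if k == m then b else col k); split; first by rewrite eq_sym gtn_eqF.
move=> k; rewrite ltnS leq_eqVlt => /orP[/eqP-> | km]; first by rewrite eqxx ltnn.
rewrite (ltn_eqF km); have [col_k col_k1] := col_ok k km; split => // _.
have [k1m | k1m] := eqVneq k.+1 m; last by apply: col_k1; rewrite ltn_neqAle k1m.
by move: b_col; rewrite -k1m eq_sym.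
Qed.

Lemma precolored_cycle_colorable (P : nat -> {set T}) a :
  1 < n -> a \in P 0 -> (forall k, 0 < k < n.-1 -> 1 < #|P k|) ->
  1 < #|P n.-1 :\ a| -> cycle_colorable P.
Proof.
move=> n_gt1 aP0 P_big P_last.
pose P' k := if k == n.-1 then P k :\ a else P k.
have aP'0 : a \in P' 0 by rewrite /P' ifN // neq_ltn; apply/orP; left; lia.
have P'_big k : 0 < k < n -> 1 < #|P' k|.
  move=> /andP[k_gt0 kn]; rewrite /P'; case: eqP => [-> // | k_neq].
  by apply: P_big; rewrite k_gt0; lia.
have [col [col0 col_ok]] := path_list_coloring aP'0 P'_big.
exists col => k kn; have [colP' col_next] := col_ok k kn.
have colP : col k \in P k.
  by move: colP'; rewrite /P'; case: eqP => // _; rewrite inE => /andP[].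
have [k1n | n_le] := ltnP k.+1 n; first by rewrite modn_small //; split => //; apply: col_next.
have k_last : k = n.-1 by lia.
rewrite k_last prednK ?modnn ?col0; last lia.
by move: colP'; rewrite /P' k_last eqxx !inE => /andP[].
Qed.

Lemma cycle_colorable_rot (P : nat -> {set T}) m :
  m <= n -> cycle_colorable (fun k => P ((k + m) %% n)) -> cycle_colorable P.
Proof.
move=> mn [col col_ok]; exists (fun k => col ((k + (n - m)) %% n)) => k kn.
have n_gt0 : 0 < n by lia.
have [colP col_next] := col_ok _ (ltn_pmod (k + (n - m)) n_gt0).
split.
  by move: colP; rewrite modnDml -addnA subnK // modnDr (modn_small kn).
by rewrite modnDml modn_rot_succ.
Qed.

Lemma precolored_cycle_colorable_at (P : nat -> {set T}) m a :
  1 < n -> m < n -> a \in P (m.+1 %% n) ->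
  (forall k, k < n -> k != m.+1 %% n -> 1 < #|P k|) -> 1 < #|P m :\ a| ->
  cycle_colorable P.
Proof.
move=> n_gt1 mn aP P_big P_m; apply: (cycle_colorable_rot mn).
apply: (precolored_cycle_colorable (a := a)) => //.
- move=> k /andP[k_gt0 kn]; apply: P_big; first by rewrite ltn_pmod; lia.
  by rewrite -[X in _ != X]modnDl eqn_modDr modnn modn_small -?lt0n //; lia.
- by rewrite -[n.-1 + _]addSnnS prednK ?modnDl ?modn_small //; lia.
Qed.

Lemma cycle_subset_eq (P : nat -> {set T}) :
  0 < n -> (forall k, k < n -> P (k.+1 %% n) \subset P k) ->
  forall k, k < n -> P k = P 0.
Proof.
move=> n_gt0 P_sub.
have P_down j k : k <= j < n -> P j \subset P k.
  elim: j => [|j IH] /andP[kj jn]; first by have -> : k = 0 by lia.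
  have [-> // | k_lt] := eqVneq k j.+1.
  apply: subset_trans (IH _) => //; last lia.
  by have := P_sub j (ltnW jn); rewrite modn_small.
move=> k kn; apply/eqP; rewrite eqEsubset P_down ?kn //=.
apply: subset_trans (P_down n.-1 k _); last lia.
by have := P_sub n.-1; rewrite prednK // modnn leqnn; apply.
Qed.

(* If some list is not contained in its predecessor's, precolour it with a colour
   missing there; otherwise all lists are equal, and either n is even and two
   colours alternate, or a list of size at least 3 leaves room to go around. *)
Lemma cycle_list_colorable (P : nat -> {set T}) :
  1 < n -> (forall k, k < n -> 1 < #|P k|) ->
  ~~ [&& odd n, [forall k : 'I_n, P k == P 0] & #|P 0| == 2] ->
  cycle_colorable P.
Proof.
move=> n_gt1 P_big not_uniform.
case: (boolP [exists m : 'I_n, ~~ (P (m.+1 %% n) \subset P m)]).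
  case/existsP => m /subsetPn[a a_in a_notin].
  apply: (precolored_cycle_colorable_at (m := m) (a := a)) => //.
  - by move=> k kn _; apply: P_big.
  - by move: (P_big m (ltn_ord m)); rewrite (cardsD1 a) (negbTE a_notin).
move/existsPn => P_sub.
have P_eq := @cycle_subset_eq P (ltnW n_gt1) (fun k kn => negbNE (P_sub (Ordinal kn))).
have all_eq : [forall k : 'I_n, P k == P 0] by apply/forallP => k; rewrite P_eq.
have P0_big := P_big 0 (ltnW n_gt1).
move: not_uniform; rewrite all_eq /= negb_and => /orP[n_even | P0_ne2].
- have /card_gt1P[a [b [a_in b_in ab]]] := P0_big.
  exists (fun k => if odd k then b else a) => k kn; rewrite P_eq //; split; first by case: ifP.
  have [k1n | n_le] := ltnP k.+1 n.
    by rewrite modn_small //=; case: odd; rewrite // eq_sym.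
  have -> : k = n.-1 by lia.
  have n1_odd : odd n.-1 by move: n_even; rewrite -{1}(prednK (ltnW n_gt1)) oddS negbK.
  by rewrite n1_odd (prednK (ltnW n_gt1)) modnn /= eq_sym.
- have /card_gt0P[a a_in] := ltnW P0_big.
  apply: (precolored_cycle_colorable (a := a)) => //.
  + by move=> j /andP[_ jn]; apply: P_big; lia.
  + rewrite P_eq; last lia.
    by move: P0_big P0_ne2; rewrite (cardsD1 a) a_in add1n ltnS; lia.
Qed.

End CycleListColoring.

Section ColoredMultigraph.
Variables (V E : finType) (c : nat) (src dst : E -> V) (phi : E -> 'I_c).
Hypothesis src_neq_dst : forall e, src e != dst e.
Local Notation n := #|V|.

Definition colors (x y : V) : {set 'I_c} := phi @: [set e | joins src dst e x y].

Definition dym (x y : V) := 1 < #|colors x y|.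

Definition link_colors (q : nat -> V) (k : nat) := colors (q k) (q (k.+1 %% n)).

Lemma joinsC e x y : joins src dst e x y = joins src dst e y x.
Proof. by rewrite /joins orbC. Qed.

Lemma colorsC x y : colors x y = colors y x.
Proof. by rewrite /colors; under eq_finset => e do rewrite joinsC. Qed.

Lemma dym_sym : symmetric dym.
Proof. by move=> x y; rewrite /dym colorsC. Qed.

Lemma dym_irr : irreflexive dym.
Proof.
move=> x; rewrite /dym /colors (_ : [set e | _] = set0) ?imset0 ?cards0 //.
apply/setP => e; rewrite !inE /joins orbb; apply/negbTE/negP => /andP[/eqP src_x /eqP dst_x].
by move: (src_neq_dst e); rewrite src_x dst_x eqxx.
Qed.

Lemma delta_dym_deg x : delta_dym src dst phi x = deg dym x.
Proof.
apply: eq_card => y; rewrite !inE /dym; apply/existsP/card_gt1P.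
  case=> e1 /existsP[e2 /and3P[j1 j2 e12]].
  by exists (phi e1), (phi e2); split => //; apply: imset_f; rewrite inE.
case=> a [b [/imsetP[e1 + ->] /imsetP[e2 + ->] e12]]; rewrite !inE => j1 j2.
by exists e1; apply/existsP; exists e2; rewrite j1 j2.
Qed.

Lemma incident_joins e x : incident src dst e x -> exists2 y, y != x & joins src dst e x y.
Proof.
case/orP => /eqP <-; [exists (dst e) | exists (src e)]; rewrite /joins ?eqxx ?orbT //.
  by rewrite eq_sym.
Qed.

Lemma has_PC_ham_cycle_colorable q :
  injective_below q -> cycle_colorable n (link_colors q) -> has_PC_ham_cycle src dst phi.
Proof.
move=> q_inj [col col_ok].
have edge_of (i : 'I_n) :
    exists e, joins src dst e (q i) (q (i.+1 %% n)) && (phi e == col i).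
  have [/imsetP[e] ] := col_ok i (ltn_ord i).
  by rewrite inE => e_joins -> _; exists e; rewrite e_joins eqxx.
have [f f_ok] := fin_all_exists edge_of.
exists (fun i => q i), f; split.
  by move=> i j /(q_inj _ _ (ltn_ord i) (ltn_ord j)) /val_inj.
move=> i; have /andP[f_joins /eqP col_i] := f_ok i; have /andP[_ /eqP col_i1] := f_ok (ordS i).
by split => //; rewrite col_i col_i1; exact: (col_ok i (ltn_ord i)).2.
Qed.

Lemma incident_color_notin (S : {set 'I_c}) v e1 e2 e3 :
  #|S| = 2 ->
  [&& incident src dst e1 v, incident src dst e2 v, incident src dst e3 v,
      phi e1 != phi e2, phi e1 != phi e3 & phi e2 != phi e3] ->
  exists2 e, incident src dst e v & phi e \notin S.
Proof.
move=> S_card /and5P[e1_v e2_v e3_v e12 /andP[e13 e23]].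
suff : ~~ [&& phi e1 \in S, phi e2 \in S & phi e3 \in S].
  by rewrite !negb_and => /or3P[]; [exists e1 | exists e2 | exists e3].
move/eqP/cards2P: S_card => [a [b [_ ->]]].
apply/and3P => -[/set2P[] E1 /set2P[] E2 /set2P[] E3].
all: by move: e12 e13 e23; rewrite E1 E2 E3 ?eqxx.
Qed.

Section OreCondition.
Hypotheses (n_gt1 : 1 < n) (dym_ore : ore dym).

Lemma has_PC_ham_cycle_nonuniform q :
  ham_cycle dym q ->
  ~~ [&& odd n, [forall k : 'I_n, link_colors q k == link_colors q 0]
      & #|link_colors q 0| == 2] ->
  has_PC_ham_cycle src dst phi.
Proof.
move=> [q_inj q_dym] nonuniform.
exact/(has_PC_ham_cycle_colorable q_inj)/cycle_list_colorable.
Qed.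

Lemma has_PC_ham_cycle_other_edge q S x y :
  ham_cycle dym q -> (forall k, k < n -> link_colors q k = S) ->
  dym x y -> colors x y != S -> has_PC_ham_cycle src dst phi.
Proof.
move=> q_cyc q_S xy_dym xy_S.
have [R [j [R_path j_gt0 jn R_j R_other]]] :=
  ham_path_through_edge colorsC dym_sym dym_irr q_cyc q_S xy_dym xy_S.
have [s [k [k' [s_cyc kn k'n s_kk']]]] :=
  ore_ham_cycle_two_labels colorsC dym_sym dym_irr dym_ore R_path j_gt0 jn R_j R_other.
apply: (has_PC_ham_cycle_nonuniform s_cyc); apply: contra s_kk' => /and3P[_ /forallP s_eq _].
by rewrite /link_colors in s_eq; rewrite (eqP (s_eq (Ordinal kn))) (eqP (s_eq (Ordinal k'n))).
Qed.

Lemma has_PC_ham_cycle_uniform (S : {set 'I_c}) v e :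
  #|S| = 2 -> (forall x y, dym x y -> colors x y = S) ->
  incident src dst e v -> phi e \notin S -> has_PC_ham_cycle src dst phi.
Proof.
move=> S_card dym_S e_v e_S.
have [w wv e_vw] := incident_joins e_v.
have e_col : phi e \in colors v w by apply: imset_f; rewrite inE.
have [q [[q_inj q_dym] q0 qn]] := ore_ham_connected dym_sym dym_irr dym_ore wv.
have pen_succ : n.-2.+1 %% n = n.-1 by rewrite modn_small; lia.
apply: (has_PC_ham_cycle_colorable q_inj).
apply: (precolored_cycle_colorable_at (m := n.-2) (a := phi e)) => //; first lia.
- by rewrite pen_succ /link_colors prednK ?modnn ?qn ?q0 //; apply: ltnW.
- move=> k kn; rewrite pen_succ => k_last.
  have k1n : k.+1 < n by lia.
  by rewrite /link_colors modn_small //; apply: q_dym.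
- rewrite /link_colors pen_succ dym_S; last first.
    by rewrite -[n.-1]pen_succ modn_small; [apply: q_dym | ]; lia.
  by have := cardsD1 (phi e) S; rewrite (negbTE e_S) add0n S_card => <-.
Qed.

End OreCondition.

End ColoredMultigraph.

Theorem mainTheorem10 (V E : finType) (c : nat) (src dst : E -> V)
    (phi : E -> 'I_c) :
  (forall e : E, src e != dst e) ->
  (forall x : V, exists e1 e2 : E,
      [&& incident src dst e1 x, incident src dst e2 x & phi e1 != phi e2]) ->
  (exists x : V, exists e1 e2 e3 : E,
      [&& incident src dst e1 x, incident src dst e2 x, incident src dst e3 x,
          phi e1 != phi e2, phi e1 != phi e3 & phi e2 != phi e3]) ->
  (forall x y : V, x != y ->
      delta_dym src dst phi x + delta_dym src dst phi y >= #|V|.+1) ->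
  has_PC_ham_cycle src dst phi.
Proof.
move=> src_neq_dst _ [v [e1 [e2 [e3 three_colors]]]] delta_ore.
have dym_ore : ore (dym src dst phi).
  by move=> x y xy; rewrite -!delta_dym_deg; exact: delta_ore.
have n_gt1 : 1 < #|V| by apply/card_gt1P; exists (src e1), (dst e1).
have [q q_cyc] := ore_ham_cycle (dym_sym src dst phi) (dym_irr phi src_neq_dst) dym_ore n_gt1.
set S := link_colors src dst phi q 0.
case: (boolP [&& odd #|V|, [forall k : 'I_#|V|, link_colors src dst phi q k == S]
              & #|S| == 2]) => [| nonuniform]; last first.
  exact (has_PC_ham_cycle_nonuniform n_gt1 q_cyc nonuniform).
case/and3P => _ /forallP q_S /eqP S_card.
case: (boolP [exists x, exists y, dym src dst phi x y && (colors src dst phi x y != S)]).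
  case/existsP => x /existsP[y /andP[xy_dym xy_S]].
  apply: (has_PC_ham_cycle_other_edge src_neq_dst n_gt1 dym_ore q_cyc _ xy_dym xy_S).
  by move=> k kn; exact/eqP/(q_S (Ordinal kn)).
move/existsPn => all_S; have [e e_v e_S] := incident_color_notin S_card three_colors.
apply: (has_PC_ham_cycle_uniform src_neq_dst n_gt1 dym_ore S_card _ e_v e_S) => x y xy_dym.
by move/existsPn/(_ y): (all_S x); rewrite xy_dym negbK => /eqP.
Qed.
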